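(* Let $F$ be an infinite field, $R$ a finite-dimensional associative unital $F$-algebra and $J$ its Jacobson radical. Then the multiplicative polynomial functions $f:R\to F$ are induced by the polynomial characters of the unit group $(R/J)^\star$: every such $f$ restricted to $R^\star$ is a character of $R^\star$ that is trivial on $1+J$, hence factors through a polynomial character of $(R/J)^\star=R^\star/(1+J)$, and $f$ is determined by this character.
   Context: A polynomial function $f:R\to F$ is multiplicative if $f(ab)=f(a)f(b)$ for all $a,b\in R$. $R^\star$ denotes the group of invertible elements of $R$; a character of an algebraic group is an algebraic group homomorphism to $F^\star$, and a polynomial character of $(R/J)^\star$ is one given by (the restriction of) a polynomial function on $R/J$. *)

From HB Require Import structures.
From mathcomp Require Import all_boot all_order all_algebra all_field.
From mathcomp Require Import mpoly.
Set Implicit Arguments. Unset Strict Implicit. Unset Printing Implicit Defensive.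
Import GRing.Theory.
Local Open Scope ring_scope.

Definition infinite_type (T : eqType) : Prop := forall s : seq T, exists x : T, x \notin s.

(* Polynomial function on a finite-dimensional F-vector space V: a polynomial in
   the coordinates w.r.t. a basis (any basis gives the same notion). *)
Definition polyfun (F : fieldType) (V : vectType F) (f : V -> F) : Prop :=
  exists p : {mpoly F[\dim (fullv : {vspace V})]},
    forall v : V, f v = p.@[fun i => coord (vbasis fullv) i v].

Definition multiplicative_fun (F : fieldType) (R : falgType F) (f : R -> F) : Prop :=
  forall a b : R, f (a * b) = f a * f b.

Definition left_ideal (F : fieldType) (R : falgType F) (I : {vspace R}) : Prop :=
  forall r x : R, x \in I -> r * x \in I.

Definition maximal_left_ideal (F : fieldType) (R : falgType F) (I : {vspace R}) : Prop :=
  [/\ left_ideal I, (1 : R) \notin I &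
      forall I' : {vspace R}, left_ideal I' -> (1 : R) \notin I' -> (I <= I')%VS -> I' = I].

Definition jacobson (F : fieldType) (R : falgType F) (x : R) : Prop :=
  forall I : {vspace R}, maximal_left_ideal I -> x \in I.

From HB Require Import structures.
From mathcomp Require Import all_boot all_order all_algebra all_field.
From mathcomp Require Import mpoly.
From Stdlib Require Import Classical FunctionalExtensionality.
From mathcomp Require Import zify.
Set Implicit Arguments. Unset Strict Implicit. Unset Printing Implicit Defensive.
Import GRing.Theory.
Local Open Scope ring_scope.

(* Units are Zariski dense in R: for each x, x + t is invertible for all but
   finitely many scalars t, so over an infinite field a polynomial function on R
   is determined by its values on units.  Elements j of the Jacobson radical are
   nilpotent, so t |-> f (1 + t j) is a polynomial whose inverse
   t |-> f ((1 + t j)^-1) is again a polynomial; it is therefore constant, and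
   f (1 + j) = 1.  Hence f (u + j) = f (u (1 + u^-1 j)) = f u for every unit u,
   and by density f (x + j) = f x for all x: f factors through R/J, through any
   linear section of the projection R -> R/J. *)

Section InfiniteField.
Variable F : fieldType.
Hypothesis infF : infinite_type F.

Lemma infinite_uniq_seq n : exists2 s : seq F, uniq s & size s = n.
Proof.
elim: n => [|n [s s_uniq s_size]]; first by exists [::].
by have [x xNs] := infF s; exists (x :: s); rewrite /= ?xNs ?s_uniq ?s_size.
Qed.

Lemma eq_poly_infinite (P Q : {poly F}) : (forall t, P.[t] = Q.[t]) -> P = Q.
Proof.
move=> eqPQ; apply/eqP; rewrite -subr_eq0; apply/eqP.
have [s s_uniq s_size] := infinite_uniq_seq (size (P - Q)).
apply: (roots_geq_poly_eq0 _ s_uniq); last by rewrite s_size.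
by apply/allP => t _; rewrite /root hornerD hornerN eqPQ subrr.
Qed.

Lemma eq_poly_off_roots (P Q q : {poly F}) : q != 0 ->
  (forall t, q.[t] != 0 -> P.[t] = Q.[t]) -> P = Q.
Proof.
move=> q_neq0 eqPQ; apply/eqP; rewrite -subr_eq0.
suff: (P - Q) * q == 0 by rewrite mulf_eq0 (negbTE q_neq0) orbF.
apply/eqP/eq_poly_infinite => t; rewrite hornerM horner0 hornerD hornerN.
by have [->|/eqPQ->] := eqVneq q.[t] 0; rewrite ?mulr0 ?subrr ?mul0r.
Qed.

End InfiniteField.

Section PolynomialFunctions.
Variables (F : fieldType) (V W : vectType F).

Lemma polyfun_affine (f : W -> F) (h : {linear V -> W}) (c : W) :
  polyfun f -> polyfun (fun v => f (h v + c)).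
Proof.
case=> p fE; set eV := vbasis {:V}; set eW := vbasis {:W}.
pose lq := [tuple \sum_(k < \dim {:V}) coord eW i (h eV`_k) *: 'X_k
                  + (coord eW i c)%:MP | i < \dim {:W}].
exists (p \mPo lq) => v; rewrite fE comp_mpoly_meval; apply: meval_eq => i.
rewrite tnth_mktuple mevalD mevalC raddf_sum linearD /=; congr (_ + _).
rewrite {1}(coord_vbasis (memvf v)) !linear_sum /=; apply: eq_bigr => k _.
by rewrite mevalZ mevalXU !linearZ /= mulrC.
Qed.

Lemma polyfun_curve (f : V -> F) n (a : nat -> V) : polyfun f ->
  exists P : {poly F}, forall t, f (\sum_(i < n) t ^+ i *: a i) = P.[t].
Proof.
case=> p fE; set e := vbasis {:V}.
pose c k : {poly F} := \sum_(i < n) coord e k (a i) *: 'X^i.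
exists (\sum_(m <- msupp p) p@_m *: \prod_k c k ^+ m k) => t.
rewrite fE mevalE -horner_evalE rmorph_sum /=; apply: eq_bigr => m _.
rewrite linearZ rmorph_prod /=; congr (_ * _); apply: eq_bigr => k _.
rewrite rmorphXn /= horner_evalE horner_sum linear_sum; congr (_ ^+ _).
by apply: eq_bigr => i _; rewrite hornerZ hornerXn linearZ /= mulrC.
Qed.

Lemma polyfun_line (f : V -> F) (a b : V) : polyfun f ->
  exists P : {poly F}, forall t, f (a + t *: b) = P.[t].
Proof.
move=> /(polyfun_curve 2 (fun i => if i is 0 then a else b)) [P fE].
by exists P => t; rewrite -fE !big_ord_recl big_ord0 addr0 expr0 scale1r expr1.
Qed.

End PolynomialFunctions.

Section Subspaces.
Variables (F : fieldType) (vT : vectType F).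

Lemma vspace_chain_stable (U : nat -> {vspace vT}) :
  (forall n, (U n.+1 <= U n)%VS) -> exists n, U n.+1 = U n.
Proof.
move=> decrU; have [k] := ubnP (\dim (U 0)); elim: k 0 => // k IHk n dimUn.
have [eqU|neqU] := eqVneq (U n.+1) (U n); first by exists n.
apply: (IHk n.+1); move: neqU dimUn; rewrite eqEdim decrU /=; lia.
Qed.

Lemma exists_maximal_vspace (P : {vspace vT} -> Prop) (L : {vspace vT}) : P L ->
  exists I, [/\ P I, (L <= I)%VS & forall I', P I' -> (I <= I')%VS -> I' = I].
Proof.
have [k] := ubnP (\dim {:vT} - \dim L); elim: k L => // k IHk L codimL PL.
have [[I' [PI' LI' neqI']]|nbig] := classic (exists I', [/\ P I', (L <= I')%VS & I' <> L]).
  have dimI' : (\dim L < \dim I')%N.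
    by rewrite ltnNge; apply: contra_notN neqI' => dimI'; apply/esym/eqP; rewrite eqEdim LI'.
  have [|I [PI I'I maxI]] := IHk I' _ PI'; first by move: codimL dimI' (dimvS (subvf I')); lia.
  by exists I; split => //; apply: subv_trans I'I.
exists L; split => // I' PI' LI'.
by apply: NNPP => neqI'; apply: nbig; exists I'.
Qed.

End Subspaces.

Section FiniteDimensionalAlgebra.
Variables (F : fieldType) (R : falgType F).

Lemma annihilating_poly (x : R) : exists2 q : {poly F}, q != 0 & horner_alg x q = 0.
Proof.
pose n := \dim {:R}; pose X := [tuple x ^+ i | i < n.+1].
have X_dep : ~~ free X.
  rewrite /free size_tuple; apply/negP => /eqP dimX.
  by have := dimvS (subvf <<X>>); rewrite dimX ltnn.
have [k relX [i ki_neq0]] : exists2 k : 'I_n.+1 -> F,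
    \sum_(i < n.+1) k i *: X`_i = 0 & exists i, k i != 0.
  apply: NNPP => Nrel; case/negP: X_dep; apply/freeP => k relX i.
  by apply: NNPP => ki_neq0; apply: Nrel; exists k => //; exists i; apply/eqP.
exists (\poly_(j < n.+1) k (inord j)).
  apply: contraNneq ki_neq0 => /(congr1 (fun p : {poly F} => p`_i)).
  by rewrite coef_poly ltn_ord coef0 inord_val => ->.
rewrite poly_def linear_sum /= -[RHS]relX; apply: eq_bigr => j _.
rewrite inord_val linearZ /= rmorphXn /= horner_algX mulr_algl.
by rewrite (nth_map j) ?size_enum_ord // nth_ord_enum.
Qed.

(* Take [Q t = q (- t)] with [q] annihilating [x]: the quotient of [q - q (- t)] by
   ['X + t] evaluated at [x] is a scalar multiple of the inverse of [x + t]. *)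
Lemma unit_add_scalar_off_roots (x : R) : exists2 Q : {poly F}, Q != 0 &
  forall t, Q.[t] != 0 -> x + t%:A \is a GRing.unit.
Proof.
have [q q_neq0 qx0] := annihilating_poly x.
exists (q \Po - 'X); first by rewrite comp_poly2_eq0 // size_polyN size_polyX.
move=> t; rewrite horner_comp hornerN hornerX; set c := q.[- t] => c_neq0.
have : root (q - c%:P) (- t) by rewrite /root hornerD hornerN hornerC subrr.
case/factor_theorem => r qE; rewrite polyCN opprK in qE.
have xtE : x + t%:A = horner_alg x ('X + t%:P).
  by rewrite rmorphD /= horner_algX horner_algC.
have rx_x : horner_alg x r * (x + t%:A) = - c%:A.
  by rewrite xtE -rmorphM -qE rmorphB /= qx0 horner_algC sub0r.
have x_rx : (x + t%:A) * horner_alg x r = - c%:A.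
  by rewrite -rx_x xtE -!rmorphM mulrC.
apply/unitrP; exists (- c^-1 *: horner_alg x r).
by rewrite -scalerAl -scalerAr rx_x x_rx scalerN scaleNr opprK scalerA mulVf // scale1r.
Qed.

Lemma polyfun_eq_on_units (f1 f2 : R -> F) : infinite_type F ->
  polyfun f1 -> polyfun f2 -> (forall u, u \is a GRing.unit -> f1 u = f2 u) ->
  f1 =1 f2.
Proof.
move=> infF pf1 pf2 eq_units x.
have [Q Q_neq0 unitQ] := unit_add_scalar_off_roots x.
have [P1 f1E] := polyfun_line x 1 pf1; have [P2 f2E] := polyfun_line x 1 pf2.
have eqP12 : P1 = P2.
  by apply: (eq_poly_off_roots infF Q_neq0) => t /unitQ x_unit; rewrite -f1E -f2E eq_units.
by have := f1E 0; rewrite eqP12 -f2E !scale0r !addr0.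
Qed.

Lemma left_ideal_coset (x : R) : left_ideal ({:R} * <[x]>)%VS.
Proof.
move=> r _ /memv_cosetP [u _ ->].
by apply/memv_cosetP; exists (r * u); rewrite ?memvf ?mulrA.
Qed.

Lemma jacobson_mull (r x : R) : jacobson x -> jacobson (r * x).
Proof. by move=> Jx I maxI; case: (maxI) => left_idI _ _; apply/left_idI/Jx. Qed.

Lemma exists_maximal_left_ideal (L : {vspace R}) : left_ideal L -> (1 : R) \notin L ->
  exists2 I, maximal_left_ideal I & (L <= I)%VS.
Proof.
move=> left_idL L1.
have [I [[left_idI I1] LI maxI]] :=
  exists_maximal_vspace (P := fun I => left_ideal I /\ (1 : R) \notin I)
    (conj left_idL L1).
by exists I => //; split => // I' left_idI' I'1; apply: maxI.
Qed.

Lemma jacobson_subr_linv (x : R) : jacobson x -> exists y, y * (1 - x) = 1.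
Proof.
move=> Jx; have [/memv_cosetP [y _ /esym yE]|L1] := boolP ((1 : R) \in ({:R} * <[1 - x]>)%VS).
  by exists y.
have [I maxI LI] := exists_maximal_left_ideal (@left_ideal_coset (1 - x)) L1.
case: (maxI) => _ I1 _; case/negP: I1.
rewrite -(subrK x 1) memvD ?(Jx I) //; apply: (subvP LI).
by apply/memv_cosetP; exists 1; rewrite ?memvf ?mul1r.
Qed.

(* The left ideals [R j^n] decrease, hence [j^n = u j^(n+1)], and [1 - u j] is left invertible. *)
Lemma jacobson_nilpotent (j : R) : jacobson j -> exists m, j ^+ m = 0.
Proof.
move=> Jj; pose U n := ({:R} * <[j ^+ n]>)%VS.
have [n eqU] : exists n, U n.+1 = U n.
  apply: vspace_chain_stable => n; apply/subvP => _ /memv_cosetP [u _ ->].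
  by apply/memv_cosetP; exists (u * j); rewrite ?memvf // exprS mulrA.
have : j ^+ n \in U n.+1 by rewrite eqU; apply/memv_cosetP; exists 1; rewrite ?memvf ?mul1r.
case/memv_cosetP => u _; rewrite exprS mulrA => jnE.
have [y yE] := jacobson_subr_linv (jacobson_mull u Jj).
by exists n; rewrite -[j ^+ n]mul1r -yE -mulrA mulrBl mul1r -jnE subrr mulr0.
Qed.

End FiniteDimensionalAlgebra.

Section MultiplicativeFunctions.
Variables (F : fieldType) (R : falgType F) (f : R -> F).

Lemma multiplicative_fun1 : multiplicative_fun f -> (exists x, f x != 0) -> f 1 = 1.
Proof.
move=> mf [x fx_neq0]; apply: (mulfI fx_neq0).
by rewrite -mf !mulr1.
Qed.

Lemma multiplicative_unit_neq0 (u : R) : multiplicative_fun f -> f 1 = 1 ->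
  u \is a GRing.unit -> f u != 0.
Proof.
move=> mf f1 u_unit; apply: contra_eq_neq f1 => fu0.
by rewrite -(mulrV u_unit) mf fu0 mul0r eq_sym oner_neq0.
Qed.

Hypotheses (infF : infinite_type F) (pf : polyfun f) (mf : multiplicative_fun f).
Hypothesis f1 : f 1 = 1.

Lemma multiplicative_nilpotent (j : R) m : j ^+ m = 0 -> f (1 + j) = 1.
Proof.
move=> jm0; have [H HE] := polyfun_line 1 j pf.
have [K KE] := polyfun_curve m (fun i => (- j) ^+ i) pf.
have HK : H * K = 1.
  apply: (eq_poly_infinite infF) => t; rewrite hornerM hornerC -HE -KE -mf -f1.
  congr f; under eq_bigr => i _ do rewrite -exprZn.
  have -> : 1 + t *: j = - (t *: - j - 1) by rewrite scalerN opprB opprK addrC.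
  by rewrite mulNr -subrX1 exprZn exprNn jm0 mulr0 scaler0 sub0r opprK.
have /andP [/eqP sizeH _] : (size H == 1) && (H`_0 \is a GRing.unit).
  by rewrite -poly_unitE; apply/unitrPr; exists K.
have Hconst t : H.[t] = H.[0] by rewrite (size1_polyC (eq_leq sizeH)) !hornerC.
by rewrite -(scale1r j) HE Hconst -HE scale0r addr0.
Qed.

Lemma multiplicative_jacobson (j : R) : jacobson j -> f (1 + j) = 1.
Proof. by case/jacobson_nilpotent => m; apply: multiplicative_nilpotent. Qed.

Lemma multiplicative_add_jacobson (x j : R) : jacobson j -> f (x + j) = f x.
Proof.
move=> Jj; have pfj : polyfun (fun y => f (y + j)) := polyfun_affine idfun j pf.
apply: (polyfun_eq_on_units infF pfj pf) => u u_unit.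
rewrite -{1}(mulr1 u) -{1}(mulVKr u_unit j) -mulrDr mf.
by rewrite multiplicative_jacobson ?mulr1 //; apply: jacobson_mull.
Qed.

End MultiplicativeFunctions.

Section JacobsonQuotient.
Variables (F : fieldType) (R S : falgType F) (f : R -> F) (pi : {lrmorphism R -> S}).
Hypotheses (infF : infinite_type F) (pf : polyfun f) (mf : multiplicative_fun f).
Hypothesis f1 : f 1 = 1.
Hypotheses (pi_surj : forall y : S, exists x : R, pi x = y)
           (pi_ker : forall x : R, pi x = 0 <-> jacobson x).

Let sigma : 'Hom(S, R) := ((linfun pi)^-1)%VF.

Lemma sigmaK : cancel sigma pi.
Proof.
move=> y; have [x <-] := pi_surj y.
by have := limg_lfunVK (memv_img (linfun pi) (memvf x)); rewrite !lfunE.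
Qed.

Let g (y : S) := f (sigma y).

Lemma gE (x : R) : g (pi x) = f x.
Proof.
rewrite /g -[sigma _](addrNK x) addrC multiplicative_add_jacobson //.
by apply/pi_ker; rewrite rmorphB /= sigmaK subrr.
Qed.

Lemma jacobson_quotient_character : exists g : S -> F,
  [/\ polyfun g,
      (forall u v : S, u \is a GRing.unit -> v \is a GRing.unit -> g (u * v) = g u * g v),
      (forall u : S, u \is a GRing.unit -> g u != 0),
      (forall u : R, u \is a GRing.unit -> f u = g (pi u)) &
      (forall x : R, f x = g (pi x))].
Proof.
have mg : multiplicative_fun g.
  by move=> u v; have [a <-] := pi_surj u; have [b <-] := pi_surj v; rewrite -rmorphM !gE mf.
have g1 : g 1 = 1 by rewrite -(rmorph1 pi) gE.
exists g; split.
- by have [p pE] := polyfun_affine sigma 0 pf; exists p => y; rewrite -pE addr0.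
- by move=> u v _ _; apply: mg.
- by move=> u; apply: multiplicative_unit_neq0 u mg g1.
- by move=> u _; rewrite gE.
- by move=> x; rewrite gE.
Qed.

End JacobsonQuotient.

Theorem lemma3p1 (F : fieldType) (R : falgType F) (f : R -> F) :
  infinite_type F ->
  polyfun f -> multiplicative_fun f -> (exists x : R, f x != 0) ->
  (* f restricted to R^* is a character of R^* ... *)
  ((forall u : R, u \is a GRing.unit -> f u != 0) /\ f 1 = 1 /\
   (* ... trivial on 1 + J ... *)
   (forall j : R, jacobson j -> f (1 + j) = 1) /\
   (* ... which factors through a polynomial character g of (R/J)^*, where R/J is
      realized as any F-algebra S with a surjective algebra morphism pi : R -> S of kernel J,
      and f is determined by this character. *)
   (forall (S : falgType F) (pi : {lrmorphism R -> S}),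
      (forall y : S, exists x : R, pi x = y) ->
      (forall x : R, pi x = 0 <-> jacobson x) ->
      exists g : S -> F,
        [/\ polyfun g,
            (forall u v : S, u \is a GRing.unit -> v \is a GRing.unit -> g (u * v) = g u * g v),
            (forall u : S, u \is a GRing.unit -> g u != 0),
            (forall u : R, u \is a GRing.unit -> f u = g (pi u)) &
            (forall x : R, f x = g (pi x))]) /\
   (* f is determined by its character on R^* *)
   (forall f' : R -> F, polyfun f' -> multiplicative_fun f' ->
      (forall u : R, u \is a GRing.unit -> f' u = f u) -> f' = f)).
Proof.
move=> infF pf mf nz; have f1 := multiplicative_fun1 mf nz.
split; first by move=> u; apply: multiplicative_unit_neq0.
do 2!split=> //; first by move=> j; apply: multiplicative_jacobson.
split; first by move=> S pi; apply: jacobson_quotient_character.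
move=> f' pf' _ eq_units; apply: functional_extensionality.
exact: polyfun_eq_on_units infF pf' pf eq_units.
Qed.
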